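(* Let $M$ be a matroid on $E=[n]$, $t,u$ positive integers, $\mathcal F$ the regular mixed subdivision defined below. Let $(X_1,Y_1)$ and $(X_2,Y_2)$ be two distinct ordered partitions of $[n]\setminus\{1\}$ into two (possibly empty) blocks, and for $k=1,2$ let $B_k$ be the unique basis such that $T_k=\mathbf e_{B_k}+u\Delta_{\{1\}\cup X_k}+t\nabla_{\{1\}\cup Y_k}$ is a top-degree face of $\mathcal F$. If $T_1\cap T_2\neq\emptyset$, then $B_1=B_2$.
   Context: $M$ is a matroid on $E=[n]=\{1,\dots,n\}$. $P(M)\subseteq\mathbb R^E$ is the convex hull of the indicator vectors $\mathbf e_B$ of bases $B$. For nonempty $S\subseteq E$, $\Delta_S=\operatorname{conv}\{\mathbf e_i:i\in S\}$, $\nabla_S=-\Delta_S$, $\Delta=\Delta_E$, $\nabla=\nabla_E$. The subdivision: fix reals $0<\alpha_1<\dots<\alpha_n$, $0<\beta_1<\dots<\beta_n$; let $\mathit{Lift}=\operatorname{conv}\{(u\mathbf e_i,\alpha_i)\}+(P(M)\times\{0\})+\operatorname{conv}\{(-t\mathbf e_i,\beta_i)\}\subseteq\mathbb R^E\times\mathbb R$. The lower faces of $\mathit{Lift}$ are the faces on which some linear functional with last coordinate $-1$ attains its maximum; their projections to $\mathbb R^E$ form the regular mixed subdivision $\mathcal F$ of $u\Delta+P(M)+t\nabla$. Each cell is canonically written $F+G+H$ (projections of the faces of the three summands of $\mathit{Lift}$ maximizing the same functional), with $F$ a face of $u\Delta$, $G$ a face of $P(M)$, $H$ a face of $t\nabla$.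 A top-degree face is a maximal cell $F+G+H$ of $\mathcal F$ with $G$ a vertex of $P(M)$. For each $X,Y$ with $X\cup Y=E$, $X\cap Y=\{1\}$ there is a unique basis $B$ such that $u\Delta_X+\mathbf e_B+t\nabla_Y$ is a top-degree face. *)

From HB Require Import structures.
From mathcomp Require Import all_boot all_order all_algebra.
Set Implicit Arguments. Unset Strict Implicit. Unset Printing Implicit Defensive.
Import Order.TTheory GRing.Theory Num.Theory.
Local Open Scope ring_scope.

Section Defs.
Variable R : realFieldType.
Variable N : nat.  (* ground set E = 'I_N *)

Definition vec := 'rV[R]_N.

Definition vset := vec -> Prop.
Definition lset := (vec * R)%type -> Prop.

Definition set_eq (A B : vset) : Prop := forall x, A x <-> B x.

Definition e_ (i : 'I_N) : vec := delta_mx 0 i.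
Definition e_set (B : {set 'I_N}) : vec := \sum_(i in B) e_ i.

Definition conv (I : finType) (A : {pred I}) (p : I -> vec) : vset :=
  fun x => exists lam : I -> R,
    [/\ forall i, 0 <= lam i, forall i, i \notin A -> lam i = 0,
        \sum_i lam i = 1 & x = \sum_i lam i *: p i].

Definition lconv (I : finType) (A : {pred I}) (p : I -> (vec * R)%type) : lset :=
  fun y => exists lam : I -> R,
    [/\ forall i, 0 <= lam i, forall i, i \notin A -> lam i = 0,
        \sum_i lam i = 1,
        y.1 = \sum_i lam i *: (p i).1 & y.2 = \sum_i lam i * (p i).2].

Definition msum (A B : vset) : vset := fun x => exists y z, [/\ A y, B z & x = y + z].
Definition lmsum (A B : lset) : lset :=
  fun x => exists y z, [/\ A y, B z & x = (y.1 + z.1, y.2 + z.2)].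
Definition sscale (a : R) (A : vset) : vset := fun x => exists y, A y /\ x = a *: y.
Definition singleton (v : vec) : vset := fun x => x = v.

Definition Delta (S : {set 'I_N}) : vset := conv (mem S) e_.
Definition Nabla (S : {set 'I_N}) : vset := sscale (-1) (Delta S).

Definition matroid_bases (bases : {set {set 'I_N}}) : Prop :=
  bases != set0 /\
  forall B1 B2, B1 \in bases -> B2 \in bases -> forall x, x \in B1 :\: B2 ->
    exists2 y, y \in B2 :\: B1 & (y |: (B1 :\ x)) \in bases.

Definition PM (bases : {set {set 'I_N}}) : vset := conv (mem bases) e_set.

Definition L1 (u : R) (alpha : 'I_N -> R) : lset :=
  lconv (mem [set: 'I_N]) (fun i => (u *: e_ i, alpha i)).
Definition L2 (bases : {set {set 'I_N}}) : lset :=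
  fun y => PM bases y.1 /\ y.2 = 0.
Definition L3 (t : R) (beta : 'I_N -> R) : lset :=
  lconv (mem [set: 'I_N]) (fun i => (- t *: e_ i, beta i)).

Definition Lift bases u t alpha beta : lset :=
  lmsum (lmsum (L1 u alpha) (L2 bases)) (L3 t beta).

Definition phi (c : vec) (y : (vec * R)%type) : R :=
  \sum_i c 0 i * y.1 0 i - y.2.

Definition face (K : lset) (c : vec) : lset :=
  fun y => K y /\ forall z, K z -> phi c z <= phi c y.

Definition proj (K : lset) : vset := fun x => exists h, K (x, h).

(* cell of the regular mixed subdivision given by the lower face for c *)
Definition cell bases u t alpha beta (c : vec) : vset :=
  proj (face (Lift bases u t alpha beta) c).

Definition is_maximal_cell bases u t alpha beta (c : vec) : Prop :=
  forall c', (forall x, cell bases u t alpha beta c x -> cell bases u t alpha beta c' x) ->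
    forall x, cell bases u t alpha beta c' x -> cell bases u t alpha beta c x.

(* "F + G + H is a top-degree face" where the canonical decomposition of
   the cell is F (face of u Delta), G (face of P(M)), H (face of t nabla). *)
Definition top_degree_face bases u t alpha beta (F G H : vset) : Prop :=
  exists c : vec,
    [/\ is_maximal_cell bases u t alpha beta c,
        set_eq (proj (face (L1 u alpha) c)) F,
        set_eq (proj (face (L2 bases) c)) G &
        set_eq (proj (face (L3 t beta) c)) H].

End Defs.

Arguments e_ {R N} i.
Arguments e_set {R N} B.
Arguments Delta {R N} S _.
Arguments Nabla {R N} S _.
Arguments PM {R N} bases _.
Arguments L2 {R N} bases _.

(* A lower face of the lift is a Minkowski sum of faces of the summands for the
   same functional, and over a given point of R^E all lower faces containing it
   sit at the same height.  So if x lies in both top-degree faces, its lift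
   (x, h) lies in both lower faces; decomposing (x, h) according to the second
   face puts the P(M)-summand e_B2 into the P(M)-face of the first functional,
   which is the single vertex e_B1. *)
From HB Require Import structures.
From mathcomp Require Import all_boot all_order all_algebra.
Import Order.TTheory GRing.Theory Num.Theory.
Local Open Scope ring_scope.
Set Implicit Arguments. Unset Strict Implicit.

Section LowerFaces.
Variables (R : realFieldType) (N : nat).
Implicit Types (A B K : lset R N) (c : vec R N) (a b : (vec R N * R)%type).

Lemma e_setE (S : {set 'I_N}) i : (e_set S : vec R N) 0 i = (i \in S)%:R.
Proof.
rewrite /e_set summxE (eq_bigr (fun j => (j == i)%:R)); last first.
  by move=> j _; rewrite mxE eqxx eq_sym.
case: (boolP (i \in S)) => iS.
  by rewrite (big_setD1 i) //= eqxx big1 ?addr0 // => j /setD1P [/negbTE ->].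
by rewrite big1 // => j jS; case: eqP jS iS => // ->; move ->.
Qed.

Lemma e_set_inj : injective (e_set : {set 'I_N} -> vec R N).
Proof.
move=> S1 S2 eS; apply/setP => i.
have := congr1 (fun v : vec R N => v 0 i) eS; rewrite /= !e_setE.
by case: (i \in S1); case: (i \in S2) => //= /eqP; rewrite ?oner_eq0 // eq_sym oner_eq0.
Qed.

Lemma phiD c a b : phi c (a.1 + b.1, a.2 + b.2) = phi c a + phi c b.
Proof.
rewrite /phi /= (eq_bigr (fun i => c 0 i * a.1 0 i + c 0 i * b.1 0 i)).
  by rewrite big_split /= addrACA opprD.
by move=> i _; rewrite mxE mulrDr.
Qed.

Lemma ler_phi_height c x h1 h2 : (phi c (x, h1) <= phi c (x, h2)) = (h2 <= h1).
Proof. by rewrite /phi /= lerD2l lerN2. Qed.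

Lemma face_lmsum A B c a b :
  face A c a -> face B c b -> face (lmsum A B) c (a.1 + b.1, a.2 + b.2).
Proof.
move=> [Aa maxa] [Bb maxb]; split; first by exists a, b.
by move=> z [y [w [Ay Bw ->]]]; rewrite !phiD lerD ?maxa ?maxb.
Qed.

Lemma face_lmsum_summands A B c a b :
  A a -> B b -> face (lmsum A B) c (a.1 + b.1, a.2 + b.2) ->
  face A c a /\ face B c b.
Proof.
move=> Aa Bb [_ maxab]; split; split=> // z Kz.
  have := maxab (z.1 + b.1, z.2 + b.2) (ex_intro _ z (ex_intro _ b (And3 Kz Bb erefl))).
  by rewrite !phiD lerD2r.
have := maxab (a.1 + z.1, a.2 + z.2) (ex_intro _ a (ex_intro _ z (And3 Aa Kz erefl))).
by rewrite !phiD lerD2l.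
Qed.

Lemma face_height_eq K c1 c2 x h1 h2 :
  face K c1 (x, h1) -> face K c2 (x, h2) -> h1 = h2.
Proof.
move=> [K1 max1] [K2 max2]; apply/le_anti/andP; split.
  by rewrite -(ler_phi_height c1 x) max1.
by rewrite -(ler_phi_height c2 x) max2.
Qed.

Lemma top_degree_face_lift bases u t alpha beta F H (B : {set 'I_N}) x :
  top_degree_face bases u t alpha beta F (singleton (e_set B)) H ->
  msum (msum (singleton (e_set B)) F) H x ->
  exists c h a b d,
    [/\ forall y, proj (face (L2 bases) c) y -> y = e_set B,
        face (Lift bases u t alpha beta) c (x, h),
        [/\ L1 u alpha a, L2 bases b, b.1 = e_set B & L3 t beta d]
      & (x, h) = (a.1 + b.1 + d.1, a.2 + b.2 + d.2)].
Proof.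
move=> [c [_ eF eG eH]] [y [z [[_ [y2 [-> Fy2 ->]]] Hz ->]]].
have [h1 f1] := proj2 (eF y2) Fy2.
have [h2 f2] := proj2 (eG (e_set B)) erefl.
have [h3 f3] := proj2 (eH z) Hz.
have xE : e_set B + y2 + z = y2 + e_set B + z by rewrite [e_set B + _]addrC.
exists c, (h1 + h2 + h3), (y2, h1), (e_set B, h2), (z, h3); split.
- by move=> w /eG.
- by rewrite xE; apply: face_lmsum (face_lmsum f1 f2) f3.
- by split; [case: f1 | case: f2 | | case: f3].
- by rewrite xE.
Qed.

End LowerFaces.

Theorem mainTheorem8 (R : realFieldType) (n : nat)
    (bases : {set {set 'I_n.+1}}) (hM : matroid_bases bases)
    (t u : nat) (ht : (0 < t)%N) (hu : (0 < u)%N)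
    (alpha beta : 'I_n.+1 -> R)
    (ha0 : 0 < alpha ord0) (ha : forall i j : 'I_n.+1, (i < j)%N -> alpha i < alpha j)
    (hb0 : 0 < beta ord0) (hb : forall i j : 'I_n.+1, (i < j)%N -> beta i < beta j)
    (X1 Y1 X2 Y2 : {set 'I_n.+1})
    (hP1 : [/\ ord0 \notin X1, ord0 \notin Y1, X1 :&: Y1 = set0 & X1 :|: Y1 = [set~ ord0]])
    (hP2 : [/\ ord0 \notin X2, ord0 \notin Y2, X2 :&: Y2 = set0 & X2 :|: Y2 = [set~ ord0]])
    (hdist : (X1, Y1) <> (X2, Y2))
    (B1 B2 : {set 'I_n.+1}) (hB1 : B1 \in bases) (hB2 : B2 \in bases)
    (hT1 : top_degree_face bases u%:R t%:R alpha beta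
             (sscale u%:R (Delta (ord0 |: X1))) (singleton (e_set B1))
             (sscale t%:R (Nabla (ord0 |: Y1))))
    (hT2 : top_degree_face bases u%:R t%:R alpha beta
             (sscale u%:R (Delta (ord0 |: X2))) (singleton (e_set B2))
             (sscale t%:R (Nabla (ord0 |: Y2))))
    (hI : exists x : 'rV[R]_n.+1,
        msum (msum (singleton (e_set B1)) (sscale u%:R (Delta (ord0 |: X1))))
             (sscale t%:R (Nabla (ord0 |: Y1))) x /\
        msum (msum (singleton (e_set B2)) (sscale u%:R (Delta (ord0 |: X2))))
             (sscale t%:R (Nabla (ord0 |: Y2))) x) :
  B1 = B2.
Proof.
case: hI => x [x1 x2].
have [c1 [h1 [_ [_ [_ [G1 F1 _ _]]]]]] := top_degree_face_lift hT1 x1.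
have [c2 [h [a [b [d [_ F2 [La Lb eb Ld] xhE]]]]]] := top_degree_face_lift hT2 x2.
have F1h : face (Lift bases u%:R t%:R alpha beta) c1 (x, h).
  by rewrite -(face_height_eq F1 F2).
have Lab : lmsum (L1 u%:R alpha) (L2 bases) (a.1 + b.1, a.2 + b.2) by exists a, b.
rewrite xhE in F1h.
have [Fab _] := face_lmsum_summands Lab Ld F1h.
have [_ Fb] := face_lmsum_summands La Lb Fab.
apply/esym/(@e_set_inj R); rewrite -eb; apply: G1; exists b.2.
by rewrite -surjective_pairing.
Qed.
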